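(* Let $A,B,C$ be subspaces. (a) If $A\perp^{\circ}B$, then $B\perp^{\circ}A$. (b) If $A\perp^{\circ}B$, then $A\cap B\neq\emptyset$. (c) If $A\perp^{\circ}B$, $B\parallel C$ and $A\cap C\neq\emptyset$, then $A\perp^{\circ}C$. (d) If $\emptyset\neq A\subsetneq B\subsetneq C$, then there is a unique subspace $B'$ such that $B\cap B'=A$, $B\perp^{\circ}B'$, and $B\sqcup B'=C$. (e) If $A\perp^{\circ}B$ and $A\perp^{\circ}C$, then $A\perp^{\circ}(B\sqcup C)$. (f) If $A\perp^{\circ}B$ and $A\cap B\subset C\subset B$, then $A\perp^{\circ}C$. (g) If $A\perp^{\circ}B$ and $A\cap B\subset C\subset A$, then $A\perp^{\circ}(B\sqcup C)$. (h) If $A\perp^{\circ}B$, $A\perp^{\circ}C$, and $A\cap B\cap C\neq\emptyset$, then $A\perp^{\circ}(B\cap C)$.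
   Context: Let $V$ be a vector space over a field with a nondegenerate symmetric bilinear form $\xi$ having no isotropic vectors. (Affine) subspaces are sets $p+W$ with $W$ a linear subspace (its direction); the empty set is also regarded as a subspace. $B\parallel C$ means $B$ and $C$ are parallel, i.e. $C$ is a translate of $B$ (they have the same direction). $X_1\sqcup X_2$ denotes the least subspace containing $X_1\cup X_2$. For nonempty subspaces $X,Y$: $X\perp Y$ iff $\xi(b-a,d-c)=0$ for all $a,b\in X$, $c,d\in Y$; $X\perp_x Y$ iff $X\perp Y$ and $X\cap Y\neq\emptyset$. $X_1\perp^{\circ}X_2$ iff there are a point $q\in X_1\cap X_2$ and subspaces $Z_1,Z_2$ with $q\in Z_1,Z_2$, $Z_i\perp_x X_1\cap X_2$, $Z_1\perp_x Z_2$, and $(X_1\cap X_2)\sqcup Z_i=X_i$ for $i=1,2$. *)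

From HB Require Import structures.
From mathcomp Require Import all_boot all_algebra.
Set Implicit Arguments. Unset Strict Implicit. Unset Printing Implicit Defensive.
Import GRing.Theory.
Local Open Scope ring_scope.

Section AffineOrtho.
Variables (F : fieldType) (V : vectType F).

Definition eqset (X Y : V -> Prop) : Prop := forall x, X x <-> Y x.
Definition incl (X Y : V -> Prop) : Prop := forall x, X x -> Y x.
Definition nonempty (X : V -> Prop) : Prop := exists x, X x.
Definition meet (X Y : V -> Prop) : V -> Prop := fun x => X x /\ Y x.

Definition subspace (X : V -> Prop) : Prop :=
  (forall x, ~ X x) \/
  exists (p : V) (W : {vspace V}), forall x, X x <-> (x - p \in W).

Definition parallel (B C : V -> Prop) : Prop :=
  exists t : V, forall x, C x <-> B (x - t).

Definition join (X1 X2 : V -> Prop) : V -> Prop :=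
  fun x => forall Y, subspace Y -> (forall y, X1 y \/ X2 y -> Y y) -> Y x.

Variable xi : V -> V -> F.

Definition perp (X Y : V -> Prop) : Prop :=
  nonempty X /\ nonempty Y /\
  forall a b c d, X a -> X b -> Y c -> Y d -> xi (b - a) (d - c) = 0.

Definition perpx (X Y : V -> Prop) : Prop := perp X Y /\ nonempty (meet X Y).

Definition perpo (X1 X2 : V -> Prop) : Prop :=
  exists q, meet X1 X2 q /\
  exists Z1 Z2 : V -> Prop,
    subspace Z1 /\ subspace Z2 /\ Z1 q /\ Z2 q /\
    perpx Z1 (meet X1 X2) /\ perpx Z2 (meet X1 X2) /\ perpx Z1 Z2 /\
    eqset (join (meet X1 X2) Z1) X1 /\ eqset (join (meet X1 X2) Z2) X2.

End AffineOrtho.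

Definition good_form (F : fieldType) (V : vectType F) (xi : V -> V -> F) : Prop :=
  [/\ forall (a : F) (u v w : V), xi (a *: u + v) w = a * xi u w + xi v w,
      forall u v : V, xi u v = xi v u,
      forall u : V, (forall v, xi u v = 0) -> u = 0
    & forall v : V, xi v v = 0 -> v = 0].

From Stdlib Require Import Setoid.
From mathcomp Require Import all_boot all_algebra.
Set Implicit Arguments. Unset Strict Implicit. Unset Printing Implicit Defensive.
Import GRing.Theory.
Local Open Scope ring_scope.

(* Through a common point q two subspaces are q + WA and q + WB, and A ⊥° B
   turns out to be the purely linear condition [vperpo WA WB]: every vector of
   WB is a vector of WA ∩ WB plus a vector orthogonal to WA.  Because an
   anisotropic form admits orthogonal projections onto every subspace, this
   condition is symmetric, and (a)-(h) become closure properties of it under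
   sums, intersections and intermediate subspaces.  The uniqueness in (d) is the
   uniqueness of the orthogonal complement of WB in WC. *)

Section Affine.
Variables (F : fieldType) (V : vectType F).

Definition aff (p : V) (W : {vspace V}) : V -> Prop := fun x => x - p \in W.

Lemma subspace_aff p W : subspace (aff p W).
Proof. by right; exists p, W. Qed.

Lemma aff_base p W : aff p W p.
Proof. by rewrite /aff subrr mem0v. Qed.

Lemma aff_addK p W x : aff p W (x + p) = (x \in W).
Proof. by rewrite /aff addrK. Qed.

Lemma eqset_refl (X : V -> Prop) : eqset X X.
Proof. by []. Qed.

Lemma eqset_sym (X Y : V -> Prop) : eqset X Y -> eqset Y X.
Proof. by move=> h x; split=> /h. Qed.

Lemma eqset_trans (X Y Z : V -> Prop) : eqset X Y -> eqset Y Z -> eqset X Z.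
Proof. by move=> h1 h2 x; split=> [/h1/h2|/h2/h1]. Qed.

Lemma eqset_aff_shift (X : V -> Prop) q p W :
  eqset X (aff q W) -> X p -> eqset X (aff p W).
Proof.
move=> hX /hX hp x; rewrite hX /aff.
have -> : x - q = (x - p) + (p - q) by rewrite addrA subrK.
by split=> [/memvB/(_ hp) | /memvD/(_ hp)]; rewrite ?addrK.
Qed.

Lemma subspace_aff_at (X : V -> Prop) q :
  subspace X -> X q -> exists W, eqset X (aff q W).
Proof.
case=> [X0 /X0 [] | [p [W hW]]] Xq; exists W.
exact: eqset_aff_shift hW Xq.
Qed.

Lemma incl_aff (X Y : V -> Prop) q W1 W2 :
  eqset X (aff q W1) -> eqset Y (aff q W2) -> incl X Y -> (W1 <= W2)%VS.
Proof.
move=> hX hY sXY; apply/subvP => u hu.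
by rewrite -(aff_addK q); apply/hY/sXY/hX; rewrite aff_addK.
Qed.

Lemma aff_dir_uniq (X : V -> Prop) p q W1 W2 :
  eqset X (aff p W1) -> eqset X (aff q W2) -> W1 = W2.
Proof.
move=> h1 h2; have h := eqset_trans (eqset_sym h1) h2.
have hp := eqset_trans h (eqset_aff_shift (eqset_refl _) ((h p).1 (aff_base p W1))).
apply/eqP; rewrite eqEsubv.
by rewrite (incl_aff (eqset_refl _) hp) ?(incl_aff hp (eqset_refl _)) // => x /hp.
Qed.

Lemma parallel_aff (B C : V -> Prop) q p W :
  eqset B (aff q W) -> parallel B C -> C p -> eqset C (aff p W).
Proof.
move=> hB [t ht]; apply: (eqset_aff_shift (q := q + t)) => x.
by rewrite ht hB /aff opprD addrA addrAC.
Qed.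

Lemma meet_aff (X Y : V -> Prop) q W1 W2 :
  eqset X (aff q W1) -> eqset Y (aff q W2) -> eqset (meet X Y) (aff q (W1 :&: W2)).
Proof.
by move=> hX hY x; rewrite /meet hX hY /aff memv_cap; split=> [[-> ->] | /andP].
Qed.

Lemma join_aff (X Y : V -> Prop) p q W1 W2 :
  eqset X (aff p W1) -> eqset Y (aff q W2) ->
  eqset (join X Y) (aff p (W1 + W2 + <[q - p]>)).
Proof.
move=> hX hY; set W := (W1 + W2 + <[q - p]>)%VS.
have XYW y : X y \/ Y y -> aff p W y.
  case=> [/hX hy | /hY hy]; rewrite /aff.
    by rewrite -[y - p]addr0 -[y - p]addr0 !memv_add ?mem0v.
  have -> : y - p = 0 + (y - q) + (q - p) by rewrite add0r addrA subrK.
  by rewrite !memv_add ?mem0v ?memv_line.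
move=> x; split; first by apply; [exact: subspace_aff | exact: XYW].
move=> hx Z sZ XYZ.
have [W' hZ] := subspace_aff_at sZ (XYZ p (or_introl ((hX p).2 (aff_base p W1)))).
have qW' : q - p \in W'.
  by have /hZ := XYZ q (or_intror ((hY q).2 (aff_base q W2))).
suff /subvP sWW' : (W <= W')%VS by apply/hZ/sWW'.
rewrite !subv_add -andbA; apply/and3P; split; apply/subvP => u hu.
- by rewrite -(aff_addK p); apply/hZ/XYZ; left; apply/hX; rewrite aff_addK.
- have /hZ : Z (u + q) by apply/XYZ; right; apply/hY; rewrite aff_addK.
  by rewrite /aff -addrA => /memvB/(_ qW'); rewrite addrK.
- by have [k ->] := vlineP _ _ hu; rewrite memvZ.
Qed.

Lemma join_aff_at (X Y : V -> Prop) q W1 W2 :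
  eqset X (aff q W1) -> eqset Y (aff q W2) -> eqset (join X Y) (aff q (W1 + W2)).
Proof.
move=> hX hY; have := join_aff hX hY; rewrite subrr (addv_idPl _) //.
by apply/subvP => u /vlineP [k ->]; rewrite scaler0 mem0v.
Qed.

End Affine.

Section Form.
Variables (F : fieldType) (V : vectType F) (xi : V -> V -> F).
Implicit Types X Y Z U W WA WB WC : {vspace V}.
Hypothesis xi_linear : forall a u v w, xi (a *: u + v) w = a * xi u w + xi v w.
Hypothesis xiC : forall u v, xi u v = xi v u.
Hypothesis xi_anisotropic : forall v, xi v v = 0 -> v = 0.

Lemma xi0l w : xi 0 w = 0.
Proof. by have := xi_linear (-1) w w w; rewrite scaleN1r addNr mulN1r addNr. Qed.

Lemma xiDl u v w : xi (u + v) w = xi u w + xi v w.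
Proof. by have := xi_linear 1 u v w; rewrite scale1r mul1r. Qed.

Lemma xiZl a u w : xi (a *: u) w = a * xi u w.
Proof. by have := xi_linear a u 0 w; rewrite !addr0 xi0l addr0. Qed.

Lemma xiBl u v w : xi (u - v) w = xi u w - xi v w.
Proof. by rewrite xiDl -scaleN1r xiZl mulN1r. Qed.

Lemma xi0r w : xi w 0 = 0.
Proof. by rewrite xiC xi0l. Qed.

Lemma xiDr u v w : xi w (u + v) = xi w u + xi w v.
Proof. by rewrite !(xiC w) xiDl. Qed.

Lemma xiZr a u w : xi w (a *: u) = a * xi w u.
Proof. by rewrite !(xiC w) xiZl. Qed.

Lemma xiBr u v w : xi w (u - v) = xi w u - xi w v.
Proof. by rewrite !(xiC w) xiBl. Qed.

Definition orth (X : {vspace V}) (v : V) := forall x, x \in X -> xi x v = 0.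

Definition orthv (X U : {vspace V}) := forall u, u \in U -> orth X u.

Lemma orthD X u v : orth X u -> orth X v -> orth X (u + v).
Proof. by move=> hu hv x xX; rewrite xiDr hu // hv // addr0. Qed.

Lemma orthB X u v : orth X u -> orth X v -> orth X (u - v).
Proof. by move=> hu hv x xX; rewrite xiBr hu // hv // subr0. Qed.

Lemma orthZ X k u : orth X u -> orth X (k *: u).
Proof. by move=> hu x xX; rewrite xiZr hu // mulr0. Qed.

Lemma orth_eq0 X v : v \in X -> orth X v -> v = 0.
Proof. by move=> vX hv; apply/xi_anisotropic/hv. Qed.

Lemma orthvC X U : orthv X U -> orthv U X.
Proof. by move=> h x xX u uU; rewrite xiC; apply: h. Qed.

Lemma orthvS X X' U U' :
  (X' <= X)%VS -> (U' <= U)%VS -> orthv X U -> orthv X' U'.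
Proof. by move=> /subvP sX /subvP sU h u /sU uU x /sX; apply: h. Qed.

Lemma orthv_addl X Y U : orthv X U -> orthv Y U -> orthv (X + Y) U.
Proof.
move=> hX hY u uU _ /memv_addP [x xX [y yY ->]].
by rewrite xiDl hX // hY // addr0.
Qed.

(* One Gram-Schmidt step: the projection onto <<s>> is corrected along the
   component of x orthogonal to <<s>>. *)
Lemma exists_orth_proj_span (s : seq V) v :
  exists2 e, e \in <<s>>%VS & orth <<s>>%VS (v - e).
Proof.
elim: s v => [|x s IH] v.
  by exists 0; rewrite ?mem0v // => a; rewrite span_nil memv0 => /eqP ->; rewrite xi0l.
have [e es oe] := IH v; have [ex exs ox] := IH x.
have sub_s : (<<s>> <= <<x :: s>>)%VS by rewrite span_cons addvSr.
have x_in : x \in <<x :: s>>%VS by rewrite span_cons (subvP (addvSl _ _)) ?memv_line.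
have orth_cons w : orth <<s>>%VS w -> xi x w = 0 -> orth <<x :: s>>%VS w.
  move=> ow xw a; rewrite span_cons => /memv_addP [b /vlineP [k ->] [c cs ->]].
  by rewrite xiDl xiZl xw mulr0 add0r ow.
set w := x - ex; have xE : x = ex + w by rewrite addrC subrK.
have [w0 | wn0] := eqVneq w 0.
  exists e; first exact: (subvP sub_s).
  by apply: orth_cons => //; rewrite xE w0 addr0; apply: oe.
have ww : xi w w != 0 by apply: contra_neq wn0 => /xi_anisotropic.
set c := xi w (v - e) / xi w w.
exists (e + c *: w).
  by apply: memvD; [exact: (subvP sub_s) | apply/memvZ/memvB => //; exact: (subvP sub_s)].
rewrite opprD addrA; apply: orth_cons; first by apply: orthB => //; apply: orthZ.
by rewrite xE xiDl xiBr xiZr (ox ex exs) oe // mulr0 subr0 add0r xiBr xiZr mulfVK // subrr.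
Qed.

Lemma exists_orth_proj (E : {vspace V}) v : exists2 e, e \in E & orth E (v - e).
Proof. by rewrite -(span_basis (vbasisP E)); apply: exists_orth_proj_span. Qed.

Lemma orth_proj_uniq X v d1 d2 :
  d1 \in X -> d2 \in X -> orth X (v - d1) -> orth X (v - d2) -> d1 = d2.
Proof.
move=> d1X d2X o1 o2; apply/eqP; rewrite -subr_eq0; apply/eqP/(orth_eq0 (memvB d1X d2X)).
have -> : d1 - d2 = (v - d2) - (v - d1) by rewrite opprB [RHS]addrC addrA subrK.
exact: orthB.
Qed.

Lemma mem_orth_summand X U v : orthv X U -> v \in (X + U)%VS -> orth X v -> v \in U.
Proof.
move=> oU /memv_addP [x xX [u uU ->]] ov.
suff -> : x = 0 by rewrite add0r.
by apply: orth_eq0 xX _; rewrite -(addrK u x); apply: orthB => //; apply: oU.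
Qed.

Lemma orth_summand_uniq X U U' :
  (X + U = X + U')%VS -> orthv X U -> orthv X U' -> U = U'.
Proof.
move=> eXU oU oU'; apply/vspaceP => u.
apply/idP/idP => hu.
  by apply: (mem_orth_summand oU'); [rewrite -eXU (subvP (addvSr _ _)) | apply: oU].
by apply: (mem_orth_summand oU); [rewrite eXU (subvP (addvSr _ _)) | apply: oU'].
Qed.

Definition vperpo (X Y : {vspace V}) :=
  forall v, v \in Y -> exists2 d, d \in (X :&: Y)%VS & orth X (v - d).

Lemma vperpo_sym X Y : vperpo X Y -> vperpo Y X.
Proof.
move=> h v vX; have [e eXY oe] := exists_orth_proj (X :&: Y)%VS v.
exists e; first by rewrite capvC.
move=> y yY; have [d dXY od] := h y yY.
rewrite -(subrK d y) xiDl (oe d dXY) addr0 xiC od //.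
by rewrite memvB // (subvP (capvSl X Y)).
Qed.

Lemma vperpo_of_subv X Y : (Y <= X)%VS -> vperpo X Y.
Proof.
move=> sYX v vY; exists v; first by rewrite memv_cap (subvP sYX).
by rewrite subrr => x _; rewrite xi0r.
Qed.

Lemma vperpo_of_orthv X U : orthv X U -> vperpo X U.
Proof. by move=> oU u uU; exists 0; rewrite ?mem0v ?subr0 //; apply: oU. Qed.

Lemma vperpo_add X Y Z : vperpo X Y -> vperpo X Z -> vperpo X (Y + Z).
Proof.
move=> hY hZ _ /memv_addP [y yY [z zZ ->]].
have [dy] := hY y yY; rewrite memv_cap => /andP [dyX dyY] oy.
have [dz] := hZ z zZ; rewrite memv_cap => /andP [dzX dzZ] oz.
exists (dy + dz); first by rewrite memv_cap memvD ?memv_add.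
by rewrite opprD addrACA; apply: orthD.
Qed.

Lemma vperpo_cap X Y Z : vperpo X Y -> vperpo X Z -> vperpo X (Y :&: Z).
Proof.
move=> hY hZ v; rewrite memv_cap => /andP [vY vZ].
have [dy] := hY v vY; rewrite memv_cap => /andP [dyX dyY] oy.
have [dz] := hZ v vZ; rewrite memv_cap => /andP [dzX dzZ] oz.
exists dy => //; rewrite !memv_cap dyX dyY.
by rewrite (orth_proj_uniq dyX dzX oy oz).
Qed.

Lemma vperpo_subv X Y Z :
  vperpo X Y -> (X :&: Y <= Z)%VS -> (Z <= Y)%VS -> vperpo X Z.
Proof.
move=> h sXYZ sZY v /(subvP sZY) /h [d dXY od]; exists d => //.
by rewrite memv_cap (subvP sXYZ) // andbT (subvP (capvSl X Y)).
Qed.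

Lemma vperpo_orth_compl X Y : vperpo X Y ->
  exists U, [/\ (U <= Y)%VS, orthv X U & (X :&: Y + U = Y)%VS].
Proof.
move=> h.
suff [U [sUY oU sYU]] : exists U,
    [/\ (U <= Y)%VS, orthv X U & (Y <= X :&: Y + U)%VS].
  exists U; split => //; apply/eqP; rewrite eqEsubv sYU andbT subv_add sUY andbT.
  exact: capvSr.
suff gen (s : seq V) : all (mem Y) s -> exists U,
    [/\ (U <= Y)%VS, orthv X U & (<<s>> <= X :&: Y + U)%VS].
  have := gen (vbasis Y); rewrite (span_basis (vbasisP Y)); apply.
  by apply/allP => v; apply: vbasis_mem.
elim: s => [|v s IH] /=.
  move=> _; exists 0%VS; split; rewrite ?span_nil ?sub0v // => u.
  by rewrite memv0 => /eqP -> x _; rewrite xi0r.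
case/andP => vY /IH [U [sUY oU sU]]; have [d dXY od] := h v vY.
have vdY : v - d \in Y by rewrite memvB // (subvP (capvSr X Y)).
exists (U + <[v - d]>)%VS; split.
- by rewrite subv_add sUY /=; apply/subvP => _ /vlineP [k ->]; rewrite memvZ.
- move=> _ /memv_addP [u uU [_ /vlineP [k ->] ->]].
  by apply: orthD; [apply: oU | apply: orthZ].
- rewrite span_cons subv_add; apply/andP; split.
    apply/subvP => _ /vlineP [k ->]; rewrite memvZ //.
    suff : d + (0 + (v - d)) \in (X :&: Y + (U + <[v - d]>))%VS.
      by rewrite add0r addrC subrK.
    by rewrite memv_add // memv_add ?mem0v ?memv_line.
  by apply: (subv_trans sU); rewrite addvS ?addvSl.
Qed.

Lemma capv_addr_orth X Z U : (Z <= X)%VS -> orthv X U -> (X :&: (Z + U) = Z)%VS.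
Proof.
move=> sZX oU; apply/eqP; rewrite eqEsubv subv_cap sZX addvSl !andbT.
apply/subvP => x; rewrite memv_cap => /andP [xX /memv_addP [z zZ [u uU xE]]].
suff u0 : u = 0 by rewrite xE u0 addr0.
apply: orth_eq0 (oU u uU).
have -> : u = x - z by rewrite xE addrAC subrr add0r.
by rewrite memvB // (subvP sZX).
Qed.

Lemma vperpo_compl_between WA WB WC : (WA <= WB)%VS -> (WB <= WC)%VS ->
  exists2 W', [/\ (WB :&: W' = WA)%VS, vperpo WB W' & (WB + W' = WC)%VS]
  & forall W, (WB :&: W = WA)%VS -> vperpo WB W -> (WB + W = WC)%VS -> W = W'.
Proof.
move=> sAB sBC.
have [U [_ oU eU]] := vperpo_orth_compl (vperpo_sym (vperpo_of_subv sBC)).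
rewrite capvC (capv_idPr sBC) in eU.
have absorb U' : (WB + (WA + U') = WB + U')%VS by rewrite addvA (addv_idPl sAB).
exists (WA + U)%VS.
  split; [exact: capv_addr_orth | | by rewrite absorb].
  exact: vperpo_add (vperpo_of_subv sAB) (vperpo_of_orthv oU).
move=> W eWA hW eWC; have [U' [_ oU' eU']] := vperpo_orth_compl hW.
rewrite eWA in eU'; rewrite -eU'; congr (_ + _)%VS.
by apply: orth_summand_uniq oU' oU; rewrite -absorb eU' eWC.
Qed.

Lemma perp_aff (X Y : V -> Prop) p p' U W :
  eqset X (aff p U) -> eqset Y (aff p' W) -> (perp xi X Y <-> orthv U W).
Proof.
move=> hX hY; split.
  case=> _ [_ H] w wW u uU; rewrite -(addrK p u) -(addrK p' w).
  by apply: H; [apply/hX/aff_base | apply/hX | apply/hY/aff_base | apply/hY]; rewrite aff_addK.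
move=> H; split; first by exists p; apply/hX/aff_base.
split; first by exists p'; apply/hY/aff_base.
move=> a b c d /hX ha /hX hb /hY hc /hY hd.
have sub_base (y z r : V) : y - z = (y - r) - (z - r) by rewrite opprB addrA subrK.
rewrite (sub_base b a p) (sub_base d c p').
by apply: H; rewrite memvB.
Qed.

Lemma perpx_aff (X Y : V -> Prop) q U W :
  eqset X (aff q U) -> eqset Y (aff q W) -> orthv U W -> perpx xi X Y.
Proof.
move=> hX hY oUW; split; first exact/(perp_aff hX hY).
by exists q; split; [apply/hX | apply/hY]; apply: aff_base.
Qed.

Lemma perpo_aff (A B : V -> Prop) q WA WB :
  eqset A (aff q WA) -> eqset B (aff q WB) -> vperpo WA WB -> perpo xi A B.
Proof.
move=> hA hB h; have hM := meet_aff hA hB.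
have [U1 [sU1 oU1 eU1]] := vperpo_orth_compl (vperpo_sym h).
have [U2 [_ oU2 eU2]] := vperpo_orth_compl h.
rewrite capvC in eU1.
exists q; split; first exact/hM/aff_base.
exists (aff q U1), (aff q U2).
do 4!(split; first by apply: subspace_aff || apply: aff_base).
split; [|split; [|split; [|split]]].
- by apply: perpx_aff (eqset_refl _) hM _; apply: orthvC; apply: orthvS oU1; rewrite ?capvSr.
- by apply: perpx_aff (eqset_refl _) hM _; apply: orthvC; apply: orthvS oU2; rewrite ?capvSl.
- by apply: perpx_aff (eqset_refl _) (eqset_refl _) _; apply: orthvS oU2.
- by rewrite -eU1 in hA; apply: eqset_trans (join_aff_at hM (eqset_refl _)) (eqset_sym hA).
by rewrite -eU2 in hB; apply: eqset_trans (join_aff_at hM (eqset_refl _)) (eqset_sym hB).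
Qed.

Lemma perpo_vperpo (A B : V -> Prop) p p' WA WB :
  perpo xi A B -> eqset A (aff p WA) -> eqset B (aff p' WB) -> vperpo WA WB.
Proof.
move=> [q [[Aq Bq] [Z1 [Z2 [sZ1 [sZ2 [Z1q [Z2q h]]]]]]]] hA hB.
case: h => [[_ _] [[pZ2M _] [[pZ1Z2 _] [jA jB]]]].
move: {hA hB}(eqset_aff_shift hA Aq) (eqset_aff_shift hB Bq) => hA hB.
have hM := meet_aff hA hB.
have [U1 h1] := subspace_aff_at sZ1 Z1q.
have [U2 h2] := subspace_aff_at sZ2 Z2q.
have eA : (WA :&: WB + U1)%VS = WA.
  exact: aff_dir_uniq (join_aff_at hM h1) (eqset_trans jA hA).
have eB : (WA :&: WB + U2)%VS = WB.
  exact: aff_dir_uniq (join_aff_at hM h2) (eqset_trans jB hB).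
have oU2 : orthv WA U2.
  rewrite -eA; apply: orthv_addl; last exact: (perp_aff h1 h2).1 pZ1Z2.
  exact: orthvC ((perp_aff h2 hM).1 pZ2M).
rewrite -eB; apply: vperpo_add; first by apply: vperpo_of_subv; apply: capvSl.
exact: vperpo_of_orthv.
Qed.

Lemma nonempty_meet_perpo (A B : V -> Prop) : perpo xi A B -> nonempty (meet A B).
Proof. by case=> q [ABq _]; exists q. Qed.

Lemma perpo_sym (A B : V -> Prop) :
  subspace A -> subspace B -> perpo xi A B -> perpo xi B A.
Proof.
move=> sA sB h; have [q [Aq Bq]] := nonempty_meet_perpo h.
have [WA hA] := subspace_aff_at sA Aq; have [WB hB] := subspace_aff_at sB Bq.
exact: perpo_aff hB hA (vperpo_sym (perpo_vperpo h hA hB)).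
Qed.

Lemma perpo_parallelr (A B C : V -> Prop) : subspace A -> subspace B ->
  perpo xi A B -> parallel B C -> nonempty (meet A C) -> perpo xi A C.
Proof.
move=> sA sB h hBC [p [Ap Cp]]; have [q [_ Bq]] := nonempty_meet_perpo h.
have [WA hA] := subspace_aff_at sA Ap; have [WB hB] := subspace_aff_at sB Bq.
exact: perpo_aff hA (parallel_aff hB hBC Cp) (perpo_vperpo h hA hB).
Qed.

Lemma perpo_compl_between (A B C : V -> Prop) :
  subspace A -> subspace B -> subspace C ->
  nonempty A -> incl A B -> incl B C ->
  exists B' : V -> Prop,
    (subspace B' /\ eqset (meet B B') A /\ perpo xi B B' /\ eqset (join B B') C) /\
    forall B'' : V -> Prop, subspace B'' ->
      eqset (meet B B'') A -> perpo xi B B'' -> eqset (join B B'') C ->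
      eqset B'' B'.
Proof.
move=> sA sB sC [q Aq] iAB iBC; have Bq := iAB q Aq; have Cq := iBC q Bq.
have [WA hA] := subspace_aff_at sA Aq; have [WB hB] := subspace_aff_at sB Bq.
have [WC hC] := subspace_aff_at sC Cq.
have [W' [eWA hW' eWC] W'_uniq] :=
  vperpo_compl_between (incl_aff hA hB iAB) (incl_aff hB hC iBC).
exists (aff q W'); split.
  split; first exact: subspace_aff.
  split; first by rewrite -eWA in hA; apply: eqset_trans (meet_aff hB _) (eqset_sym hA).
  split; first exact: perpo_aff hB (eqset_refl _) hW'.
  by rewrite -eWC in hC; apply: eqset_trans (join_aff_at hB _) (eqset_sym hC).
move=> B'' sB'' hM hP hJ; have [W hW] := subspace_aff_at sB'' (proj2 ((hM q).2 Aq)).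
rewrite -(W'_uniq W) //.
- exact: aff_dir_uniq (meet_aff hB hW) (eqset_trans hM hA).
- exact: perpo_vperpo hP hB hW.
exact: aff_dir_uniq (join_aff_at hB hW) (eqset_trans hJ hC).
Qed.

Lemma perpo_joinr (A B C : V -> Prop) : subspace A -> subspace B -> subspace C ->
  perpo xi A B -> perpo xi A C -> perpo xi A (join B C).
Proof.
move=> sA sB sC hB' hC'.
have [q1 [Aq1 Bq1]] := nonempty_meet_perpo hB'.
have [q2 [Aq2 Cq2]] := nonempty_meet_perpo hC'.
have [WA hA] := subspace_aff_at sA Aq1; have [WB hB] := subspace_aff_at sB Bq1.
have [WC hC] := subspace_aff_at sC Cq2.
apply: (perpo_aff hA (join_aff hB hC)).
apply: vperpo_add; first exact: vperpo_add (perpo_vperpo hB' hA hB)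
  (perpo_vperpo hC' hA hC).
apply: vperpo_of_subv; apply/subvP => _ /vlineP [k ->].
exact: memvZ ((hA q2).1 Aq2).
Qed.

Lemma perpo_between (A B C : V -> Prop) : subspace A -> subspace B -> subspace C ->
  perpo xi A B -> incl (meet A B) C -> incl C B -> perpo xi A C.
Proof.
move=> sA sB sC h sABC sCB; have [q ABq] := nonempty_meet_perpo h.
have [WA hA] := subspace_aff_at sA (proj1 ABq).
have [WB hB] := subspace_aff_at sB (proj2 ABq).
have [WC hC] := subspace_aff_at sC (sABC q ABq).
apply: (perpo_aff hA hC (vperpo_subv (perpo_vperpo h hA hB) _ _)).
  exact: incl_aff (meet_aff hA hB) hC sABC.
exact: incl_aff hC hB sCB.
Qed.

Lemma perpo_join_subl (A B C : V -> Prop) : subspace A -> subspace B -> subspace C ->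
  perpo xi A B -> incl (meet A B) C -> incl C A -> perpo xi A (join B C).
Proof.
move=> sA sB sC h sABC sCA; have [q ABq] := nonempty_meet_perpo h.
have [WA hA] := subspace_aff_at sA (proj1 ABq).
have [WB hB] := subspace_aff_at sB (proj2 ABq).
have [WC hC] := subspace_aff_at sC (sABC q ABq).
apply: (perpo_aff hA (join_aff_at hB hC)).
exact: vperpo_add (perpo_vperpo h hA hB) (vperpo_of_subv (incl_aff hC hA sCA)).
Qed.

Lemma perpo_meetr (A B C : V -> Prop) : subspace A -> subspace B -> subspace C ->
  perpo xi A B -> perpo xi A C -> nonempty (meet (meet A B) C) ->
  perpo xi A (meet B C).
Proof.
move=> sA sB sC hB' hC' [p [[Ap Bp] Cp]].
have [WA hA] := subspace_aff_at sA Ap; have [WB hB] := subspace_aff_at sB Bp.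
have [WC hC] := subspace_aff_at sC Cp.
apply: (perpo_aff hA (meet_aff hB hC)).
exact: vperpo_cap (perpo_vperpo hB' hA hB) (perpo_vperpo hC' hA hC).
Qed.

End Form.

Theorem proposition3p7 (F : fieldType) (V : vectType F) (xi : V -> V -> F)
  (hxi : good_form xi) :
  (* (a) *)
  (forall A B : V -> Prop, subspace A -> subspace B ->
     perpo xi A B -> perpo xi B A) /\
  (* (b) *)
  (forall A B : V -> Prop, subspace A -> subspace B ->
     perpo xi A B -> nonempty (meet A B)) /\
  (* (c) *)
  (forall A B C : V -> Prop, subspace A -> subspace B -> subspace C ->
     perpo xi A B -> parallel B C -> nonempty (meet A C) -> perpo xi A C) /\
  (* (d) *)
  (forall A B C : V -> Prop, subspace A -> subspace B -> subspace C ->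
     nonempty A -> incl A B -> ~ eqset A B -> incl B C -> ~ eqset B C ->
     exists B' : V -> Prop,
       (subspace B' /\ eqset (meet B B') A /\ perpo xi B B' /\ eqset (join B B') C) /\
       forall B'' : V -> Prop, subspace B'' ->
         eqset (meet B B'') A -> perpo xi B B'' -> eqset (join B B'') C ->
         eqset B'' B') /\
  (* (e) *)
  (forall A B C : V -> Prop, subspace A -> subspace B -> subspace C ->
     perpo xi A B -> perpo xi A C -> perpo xi A (join B C)) /\
  (* (f) *)
  (forall A B C : V -> Prop, subspace A -> subspace B -> subspace C ->
     perpo xi A B -> incl (meet A B) C -> incl C B -> perpo xi A C) /\
  (* (g) *)
  (forall A B C : V -> Prop, subspace A -> subspace B -> subspace C ->
     perpo xi A B -> incl (meet A B) C -> incl C A -> perpo xi A (join B C)) /\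
  (* (h) *)
  (forall A B C : V -> Prop, subspace A -> subspace B -> subspace C ->
     perpo xi A B -> perpo xi A C -> nonempty (meet (meet A B) C) ->
     perpo xi A (meet B C)).
Proof.
case: hxi => xi_linear xiC _ xi_anisotropic.
split; first by move=> A B; apply: perpo_sym.
split; first by move=> A B _ _; apply: nonempty_meet_perpo.
split; first by move=> A B C sA sB _; apply: perpo_parallelr.
split; first by move=> A B C sA sB sC nA sAB _ sBC _; apply: perpo_compl_between.
split; first by move=> A B C; apply: perpo_joinr.
split; first by move=> A B C; apply: perpo_between.
split; first by move=> A B C; apply: perpo_join_subl.
by move=> A B C; apply: perpo_meetr.
Qed.
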